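(* Let $X$ be a locally compact Hausdorff space, $\zeta$ a quasi-integral on $X$, $O\in\mathcal O(X)$, and $\widehat O=O\cup\{\infty\}$ the one-point compactification of $O$. Let $C_0(\widehat O)=\{f\in C(\widehat O)\mid f(\infty)=0\}$, in which $C_c(O)$ is uniformly dense; since $\zeta|_{C_c(O)}$ is Lipschitz, it has a unique Lipschitz extension $\widehat\zeta_O$ to $C_0(\widehat O)$. For general $f\in C(\widehat O)$ set $\widehat\zeta_O(f)=\widehat\zeta_O(f-f(\infty))+\lambda_O f(\infty)$, where $\lambda_O=\sup\{\zeta(g)\mid g\in C_c(O),\ g\le\mathbf 1_O\}$. Then $\widehat\zeta_O:C(\widehat O)\to\mathbb R$ is a quasi-integral on the compact space $\widehat O$; more precisely it is monotone, Lipschitz, and linear on every subspace $\{\phi\circ f\mid\phi\in C(\mathbb R)\}$, $f\in C(\widehat O)$.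
   Context: $C_c(X)$ denotes real-valued continuous functions with compact support, with the uniform norm; $\mathbf 1_A$ is an indicator function; $\mathcal O(X)$ is the family of open subsets of $X$ with compact closure. A quasi-integral on a locally compact Hausdorff space $X$ is a functional $\eta:C_c(X)\to\mathbb R$ such that: (i) $\eta(f)\le\eta(g)$ whenever $f\le g$; (ii) for every compact $K\subset X$ there is $N_K\ge0$ with $|\eta(f)-\eta(g)|\le N_K\|f-g\|$ for all $f,g$ supported in $K$; (iii) for every $f\in C_c(X)$, $\eta$ is linear on $\{\phi\circ f\mid \phi\in C(\mathbb R),\ \phi(0)=0\}$. *)

From Stdlib Require Import Reals List ClassicalEpsilon.
Open Scope R_scope.

Section Topo.
Context {X : Type}.

Definition is_topology (T : (X -> Prop) -> Prop) : Prop :=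
  T (fun _ => True) /\ T (fun _ => False) /\
  (forall U V, T U -> T V -> T (fun x => U x /\ V x)) /\
  (forall F : (X -> Prop) -> Prop, (forall U, F U -> T U) ->
      T (fun x => exists U, F U /\ U x)).

Definition compactT (T : (X -> Prop) -> Prop) (K : X -> Prop) : Prop :=
  forall F : (X -> Prop) -> Prop, (forall U, F U -> T U) ->
    (forall x, K x -> exists U, F U /\ U x) ->
    exists l : list (X -> Prop), (forall U, In U l -> F U) /\
      (forall x, K x -> exists U, In U l /\ U x).

Definition hausdorff (T : (X -> Prop) -> Prop) : Prop :=
  forall x y, x <> y -> exists U V, T U /\ T V /\ U x /\ V y /\
    (forall z, U z -> V z -> False).

Definition closureT (T : (X -> Prop) -> Prop) (A : X -> Prop) : X -> Prop :=
  fun x => forall U, T U -> U x -> exists y, U y /\ A y.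

Definition locally_compact (T : (X -> Prop) -> Prop) : Prop :=
  forall x, exists U, T U /\ U x /\ compactT T (closureT T U).

Definition supported_in (f : X -> R) (K : X -> Prop) : Prop :=
  forall x, ~ K x -> f x = 0.
End Topo.

Definition open_R (U : R -> Prop) : Prop :=
  forall x, U x -> exists eps, eps > 0 /\ forall y, Rabs (y - x) < eps -> U y.

Definition continuousT {X Y : Type} (TX : (X -> Prop) -> Prop)
  (TY : (Y -> Prop) -> Prop) (f : X -> Y) : Prop :=
  forall V, TY V -> TX (fun x => V (f x)).

Definition Cc {X : Type} (T : (X -> Prop) -> Prop) (f : X -> R) : Prop :=
  continuousT T open_R f /\ exists K, compactT T K /\ supported_in f K.

Definition quasi_integral {X : Type} (T : (X -> Prop) -> Prop)
  (eta : (X -> R) -> R) : Prop :=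
  (forall f g, Cc T f -> Cc T g -> (forall x, f x <= g x) -> eta f <= eta g) /\
  (forall K, compactT T K -> exists N, 0 <= N /\
     forall f g, Cc T f -> Cc T g -> supported_in f K -> supported_in g K ->
     forall c, (forall x, Rabs (f x - g x) <= c) -> Rabs (eta f - eta g) <= N * c) /\
  (forall f, Cc T f -> forall p q : R -> R,
     continuousT open_R open_R p -> continuousT open_R open_R q -> p 0 = 0 -> q 0 = 0 ->
     forall a b, eta (fun x => a * p (f x) + b * q (f x)) =
                 a * eta (fun x => p (f x)) + b * eta (fun x => q (f x))).

(* one-point compactification of an open O : points Some x (x in O) and None = infinity *)
Definition Ohat {X : Type} (O : X -> Prop) : Type := option {x : X | O x}.

Definition ohat_open {X : Type} (T : (X -> Prop) -> Prop) (O : X -> Prop)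
  (W : Ohat O -> Prop) : Prop :=
  T (fun x => exists h : O x, W (Some (exist _ x h))) /\
  (W None -> compactT T (fun x => exists h : O x, ~ W (Some (exist _ x h)))).

(* C_c(O), viewed inside C_c(X) *)
Definition Cc_in {X : Type} (T : (X -> Prop) -> Prop) (O : X -> Prop) (g : X -> R) : Prop :=
  Cc T g /\ exists K, compactT T K /\ (forall x, K x -> O x) /\ supported_in g K.

(* g in C_c(O) as an element of C_0(Ohat) *)
Definition extend {X : Type} (O : X -> Prop) (g : X -> R) : Ohat O -> R :=
  fun p => match p with Some x => g (proj1_sig x) | None => 0 end.

(* the extension by continuity of zeta|C_c(O) to C_0(Ohat): the limit of zeta(g)
   as g in C_c(O) tends uniformly to f *)
Definition zeta0 {X : Type} (T : (X -> Prop) -> Prop) (zeta : (X -> R) -> R)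
  (O : X -> Prop) (f : Ohat O -> R) : R :=
  epsilon (inhabits 0) (fun r => forall eps, eps > 0 -> exists delta, delta > 0 /\
    forall g, Cc_in T O g -> (forall p, Rabs (extend O g p - f p) <= delta) ->
      Rabs (zeta g - r) <= eps).

Definition lambdaO {X : Type} (T : (X -> Prop) -> Prop) (zeta : (X -> R) -> R)
  (O : X -> Prop) : R :=
  epsilon (inhabits 0) (is_lub (fun r => exists g, Cc_in T O g /\
     (forall x, O x -> g x <= 1) /\ (forall x, ~ O x -> g x <= 0) /\ r = zeta g)).

Definition zeta_hat {X : Type} (T : (X -> Prop) -> Prop) (zeta : (X -> R) -> R)
  (O : X -> Prop) (f : Ohat O -> R) : R :=
  zeta0 T zeta O (fun p => f p - f None) + lambdaO T zeta O * f None.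

From Stdlib Require Import Reals Lra List ClassicalEpsilon ProofIrrelevance FunctionalExtensionality PropExtensionality.
Open Scope R_scope.

(* Every f in C_0(Ô) is the uniform limit of the functions [shrink d ∘ f] of C_c(O),
   which vanish where |f| <= d.  Since ζ is N0-Lipschitz on functions supported in the
   compact closure of O, ζ̂_O is well defined and N0-Lipschitz on C_0(Ô), and linearity
   on {φ ∘ f} passes to the limit because φ ∘ shrink d ∘ f approximates φ ∘ f.
   Monotonicity is where λ_O enters: if h <= k + d with h(∞) = k(∞) = 0, then up to
   O(δ) the approximant of h lies below k' + d w, where k' approximates k and
   w ∈ C_c(O), 0 <= w <= 1, is a ramp equal to 1 on the support of k'; quasi-integrals
   are additive on such sums, so ζ(k' + d w) = ζ(k') + d ζ(w) <= ζ(k') + d λ_O.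
   Everything transfers to general f ∈ C(Ô) by centring at f(∞). *)

Ltac minmax_lra := unfold Rmax, Rmin, Rabs in *;
  repeat match goal with
  | |- context [Rle_dec ?a ?b] => destruct (Rle_dec a b)
  | |- context [Rcase_abs ?a] => destruct (Rcase_abs a)
  | H : context [Rle_dec ?a ?b] |- _ => destruct (Rle_dec a b)
  | H : context [Rcase_abs ?a] |- _ => destruct (Rcase_abs a)
  end; lra.

Lemma Rle_of_le_add_mul x y C : 0 <= C -> (forall e, 0 < e -> x <= y + C * e) -> x <= y.
Proof.
  intros HC H. apply Rle_plus_epsilon. intros e He.
  assert (Hq : 0 < e / (C + 1)) by (apply Rdiv_lt_0_compat; lra).
  apply Rle_trans with (y + C * (e / (C + 1))); [apply H; exact Hq|].
  assert (C * (e / (C + 1)) <= e); [|lra].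
  apply Rmult_le_reg_r with (C + 1); [lra|].
  replace (C * (e / (C + 1)) * (C + 1)) with (C * e) by (field; lra). nra.
Qed.

Lemma eq_of_dist_le_mul x y C : 0 <= C -> (forall e, 0 < e -> Rabs (x - y) <= C * e) -> x = y.
Proof.
  intros HC H. apply Rminus_diag_uniq.
  assert (Rabs (x - y) <= 0).
  { apply (Rle_of_le_add_mul _ _ C HC). intros e He. rewrite Rplus_0_l. auto. }
  pose proof (Rabs_pos (x - y)). minmax_lra.
Qed.

(** * Cutoff functions *)

Definition soft_threshold (d t : R) : R := t - Rmax (- d) (Rmin d t).
Definition shrink (d t : R) : R := 2 * soft_threshold d t - soft_threshold (2 * d) t.
Definition ramp (d t : R) : R := Rmax 0 (Rmin 1 (Rabs t / d - 1)).
Definition pos_part (t : R) : R := Rmax t 0.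
Definition neg_part (t : R) : R := Rmax (- t) 0.

Lemma shrink_0 d : shrink d 0 = 0.
Proof. unfold shrink, soft_threshold. minmax_lra. Qed.

Lemma shrink_small d t : 0 < d -> Rabs t <= d -> shrink d t = 0.
Proof. intros. unfold shrink, soft_threshold. minmax_lra. Qed.

Lemma shrink_large d t : 0 < d -> 2 * d <= Rabs t -> shrink d t = t.
Proof. intros. unfold shrink, soft_threshold. minmax_lra. Qed.

Lemma shrink_abs_le d t : 0 < d -> Rabs (shrink d t) <= Rabs t.
Proof. intros. unfold shrink, soft_threshold. minmax_lra. Qed.

Lemma shrink_dist d t : 0 < d -> Rabs (shrink d t - t) <= d.
Proof. intros. unfold shrink, soft_threshold. minmax_lra. Qed.

Lemma shrink_lipschitz d a b : 0 < d -> Rabs (shrink d a - shrink d b) <= 3 * Rabs (a - b).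
Proof. intros. unfold shrink, soft_threshold. minmax_lra. Qed.

Lemma ramp_range d t : 0 <= ramp d t <= 1.
Proof. unfold ramp. minmax_lra. Qed.

Lemma ramp_small d t : 0 < d -> Rabs t <= d -> ramp d t = 0.
Proof.
  intros Hd Ht. unfold ramp.
  assert (Rabs t / d <= 1).
  { apply Rmult_le_reg_r with d; [exact Hd|]. unfold Rdiv. rewrite Rmult_assoc, Rinv_l; lra. }
  revert H. generalize (Rabs t / d). intros. minmax_lra.
Qed.

Lemma ramp_large d t : 0 < d -> 2 * d <= Rabs t -> ramp d t = 1.
Proof.
  intros Hd Ht. unfold ramp.
  assert (2 <= Rabs t / d).
  { apply Rmult_le_reg_r with d; [exact Hd|]. unfold Rdiv. rewrite Rmult_assoc, Rinv_l; lra. }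
  revert H. generalize (Rabs t / d). intros. minmax_lra.
Qed.

Lemma ramp_lipschitz d a b : 0 < d -> Rabs (ramp d a - ramp d b) <= / d * Rabs (a - b).
Proof.
  intros Hd. unfold ramp.
  assert (Rabs (Rabs a / d - Rabs b / d) <= / d * Rabs (a - b)).
  { unfold Rdiv. rewrite <- Rmult_minus_distr_r, Rabs_mult, Rmult_comm.
    rewrite (Rabs_right (/ d)) by (left; apply Rinv_0_lt_compat; exact Hd).
    apply Rmult_le_compat_l; [left; apply Rinv_0_lt_compat; exact Hd|].
    apply Rabs_triang_inv2. }
  revert H. generalize (Rabs a / d) (Rabs b / d). intros. minmax_lra.
Qed.

(* Where [|a|] or [|b|] reaches [2 dl] one ramp is [1] and shrinking moves each
   point by at most [2 dl]; elsewhere the shrinking of [a] vanishes. *)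
Lemma shrink_le_add_ramp a b d dl : 0 < dl -> 0 <= d -> a <= b + d ->
  shrink (2 * dl) a <= shrink (2 * dl) b + d * Rmax (ramp dl a) (ramp dl b) + 4 * dl.
Proof.
  intros Hdl Hd Hab.
  pose proof (shrink_dist (2 * dl) a) as Da. pose proof (shrink_dist (2 * dl) b) as Db.
  pose proof (ramp_range dl a) as Ra. pose proof (ramp_range dl b) as Rb.
  destruct (Rle_dec (2 * dl) (Rabs a)) as [Ha|Ha].
  - rewrite (ramp_large dl a) by lra.
    replace (Rmax 1 (ramp dl b)) with 1 by minmax_lra. minmax_lra.
  - destruct (Rle_dec (2 * dl) (Rabs b)) as [Hb|Hb].
    + rewrite (ramp_large dl b) by lra.
      replace (Rmax (ramp dl a) 1) with 1 by minmax_lra. minmax_lra.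
    + rewrite (shrink_small _ a), (shrink_small _ b) by lra.
      assert (0 <= d * Rmax (ramp dl a) (ramp dl b)) by (apply Rmult_le_pos; minmax_lra). lra.
Qed.
(** * Topology *)

Section Topology.
Context {X : Type} (T : (X -> Prop) -> Prop) (HT : is_topology T).

Lemma open_full : T (fun _ => True).
Proof. apply HT. Qed.

Lemma open_empty : T (fun _ => False).
Proof. apply HT. Qed.

Lemma open_inter U V : T U -> T V -> T (fun x => U x /\ V x).
Proof. apply HT. Qed.

Lemma open_iff U V : T U -> (forall x, U x <-> V x) -> T V.
Proof.
  intros HU E. replace V with U; [exact HU|].
  extensionality x. apply propositional_extensionality, E.
Qed.

Lemma open_of_neighbourhoods S :
  (forall x, S x -> exists U, T U /\ U x /\ forall y, U y -> S y) -> T S.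
Proof.
  intros H. destruct HT as (_ & _ & _ & Hunion).
  apply open_iff with (fun x => exists U, (T U /\ forall y, U y -> S y) /\ U x).
  - apply Hunion. intros U [HU _]. exact HU.
  - intros x. split.
    + intros (U & (_ & HUS) & Ux). auto.
    + intros Sx. destruct (H x Sx) as (U & HU & Ux & HUS). exists U. auto.
Qed.

Lemma compact_empty : compactT T (fun _ => False).
Proof. intros F _ _. exists nil. split; intros ? []. Qed.

Lemma compact_union K1 K2 :
  compactT T K1 -> compactT T K2 -> compactT T (fun x => K1 x \/ K2 x).
Proof.
  intros H1 H2 F HF Hcov.
  destruct (H1 F HF) as (l1 & Hl1 & Hc1); [intros; apply Hcov; auto|].
  destruct (H2 F HF) as (l2 & Hl2 & Hc2); [intros; apply Hcov; auto|].
  exists (l1 ++ l2). split.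
  - intros U HU. apply in_app_or in HU. destruct HU; auto.
  - intros x [Kx|Kx].
    + destruct (Hc1 x Kx) as (U & HU & Ux). exists U. split; [apply in_or_app|]; auto.
    + destruct (Hc2 x Kx) as (U & HU & Ux). exists U. split; [apply in_or_app|]; auto.
Qed.

Lemma disjoint_nbhd_of_list y (l : list (X -> Prop)) :
  (forall U, In U l -> exists V, T V /\ V y /\ forall z, U z -> V z -> False) ->
  exists V, T V /\ V y /\ forall U, In U l -> forall z, U z -> V z -> False.
Proof.
  induction l as [|U l IH]; intros Hl.
  - exists (fun _ => True). split; [apply open_full|]. split; [exact I|]. intros _ [].
  - destruct (Hl U (or_introl eq_refl)) as (V1 & HV1 & V1y & D1).
    destruct IH as (V2 & HV2 & V2y & D2); [intros U' HU'; apply Hl; right; exact HU'|].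
    exists (fun z => V1 z /\ V2 z). split; [apply open_inter; auto|]. split; [auto|].
    intros U' [<-|HU'] z Uz [V1z V2z]; eauto.
Qed.

Lemma compact_complement_open K : hausdorff T -> compactT T K -> T (fun x => ~ K x).
Proof.
  intros Hh HK. apply open_of_neighbourhoods. intros y Ky.
  set (Sep := fun U => T U /\ exists V, T V /\ V y /\ forall z, U z -> V z -> False).
  destruct (HK Sep) as (l & Hl & Hcov).
  - intros U [HU _]. exact HU.
  - intros x Kx. assert (Hxy : x <> y) by (intros ->; contradiction).
    destruct (Hh x y Hxy) as (U & V & HU & HV & Ux & Vy & D).
    exists U. split; [split; [exact HU|exists V; auto]|exact Ux].
  - destruct (disjoint_nbhd_of_list y l) as (V & HV & Vy & D).
    { intros U HU. apply (Hl U HU). }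
    exists V. split; [exact HV|]. split; [exact Vy|]. intros z Vz Kz.
    destruct (Hcov z Kz) as (U & HU & Uz). exact (D U HU z Uz Vz).
Qed.

Lemma continuous_const c : continuousT T open_R (fun _ => c).
Proof.
  intros V _. destruct (classic (V c)) as [Vc|Vc].
  - apply open_iff with (fun _ => True); [apply open_full|tauto].
  - apply open_iff with (fun _ => False); [apply open_empty|tauto].
Qed.

End Topology.

Lemma open_R_ball c e : open_R (fun t => Rabs (t - c) < e).
Proof.
  intros x Hx. exists (e - Rabs (x - c)). split; [lra|].
  intros y Hy. replace (y - c) with ((y - x) + (x - c)) by ring.
  pose proof (Rabs_triang (y - x) (x - c)). lra.
Qed.

Lemma open_R_topology : is_topology open_R.
Proof.
  split; [|split; [|split]].
  - intros x _. exists 1. split; [lra|intros; exact I].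
  - intros x [].
  - intros U V HU HV x [Ux Vx].
    destruct (HU x Ux) as (e1 & He1 & H1). destruct (HV x Vx) as (e2 & He2 & H2).
    exists (Rmin e1 e2). split; [apply Rmin_pos; lra|].
    intros y Hy. pose proof (Rmin_l e1 e2). pose proof (Rmin_r e1 e2).
    split; [apply H1|apply H2]; lra.
  - intros F HF x (U & FU & Ux). destruct (HF U FU x Ux) as (e & He & H).
    exists e. split; [exact He|]. intros y Hy. exists U. auto.
Qed.

Lemma continuous_comp {A B C : Type} TA TB TC (f : A -> B) (g : B -> C) :
  continuousT TA TB f -> continuousT TB TC g -> continuousT TA TC (fun x => g (f x)).
Proof. intros Hf Hg V HV. exact (Hf _ (Hg V HV)). Qed.

Lemma continuous_of_lipschitz (psi : R -> R) L : 0 <= L ->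
  (forall a b, Rabs (psi a - psi b) <= L * Rabs (a - b)) -> continuousT open_R open_R psi.
Proof.
  intros HL H V HV x Hx. destruct (HV _ Hx) as (e & He & HVe).
  exists (e / (L + 1)). split; [apply Rdiv_lt_0_compat; lra|].
  intros y Hy. apply HVe. eapply Rle_lt_trans; [apply H|].
  apply Rle_lt_trans with ((L + 1) * Rabs (y - x)).
  - apply Rmult_le_compat_r; [apply Rabs_pos|lra].
  - apply Rmult_lt_reg_r with (/ (L + 1)); [apply Rinv_0_lt_compat; lra|].
    replace ((L + 1) * Rabs (y - x) * / (L + 1)) with (Rabs (y - x)) by (field; lra). exact Hy.
Qed.

Lemma continuous_nonexpansive (psi : R -> R) :
  (forall a b, Rabs (psi a - psi b) <= Rabs (a - b)) -> continuousT open_R open_R psi.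
Proof.
  intros H. apply (continuous_of_lipschitz psi 1); [lra|]. intros. rewrite Rmult_1_l. apply H.
Qed.

Definition lipschitz2 (Phi : R -> R -> R) (L : R) : Prop :=
  forall a b a' b', Rabs (Phi a b - Phi a' b') <= L * (Rabs (a - a') + Rabs (b - b')).

Lemma lipschitz2_nonneg Phi L : lipschitz2 Phi L -> 0 <= L.
Proof.
  intros H. specialize (H 0 1 0 0).
  rewrite !Rminus_0_r, Rabs_R0, Rabs_R1, Rplus_0_l, Rmult_1_r in H.
  pose proof (Rabs_pos (Phi 0 1 - Phi 0 0)). lra.
Qed.

Lemma lipschitz2_lincomb a b : lipschitz2 (fun u v => a * u + b * v) (Rabs a + Rabs b).
Proof.
  intros u v u' v'. replace (a * u + b * v - (a * u' + b * v'))
    with (a * (u - u') + b * (v - v')) by ring.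
  eapply Rle_trans; [apply Rabs_triang|]. rewrite !Rabs_mult.
  pose proof (Rabs_pos a). pose proof (Rabs_pos b).
  pose proof (Rabs_pos (u - u')). pose proof (Rabs_pos (v - v')). nra.
Qed.

Lemma lipschitz2_min : lipschitz2 Rmin 1.
Proof. intros a b a' b'. minmax_lra. Qed.

Lemma lipschitz2_max : lipschitz2 Rmax 1.
Proof. intros a b a' b'. minmax_lra. Qed.

Lemma continuous_combine {X : Type} (T : (X -> Prop) -> Prop) (HT : is_topology T)
  (k w : X -> R) (Phi : R -> R -> R) L :
  continuousT T open_R k -> continuousT T open_R w -> lipschitz2 Phi L ->
  continuousT T open_R (fun x => Phi (k x) (w x)).
Proof.
  intros Hk Hw HPhi V HV. pose proof (lipschitz2_nonneg _ _ HPhi) as HL.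
  apply (open_of_neighbourhoods T HT). intros x Hx.
  destruct (HV _ Hx) as (e & He & HVe).
  set (r := e / (2 * L + 1)).
  assert (Hr : r > 0) by (apply Rdiv_lt_0_compat; lra).
  exists (fun y => Rabs (k y - k x) < r /\ Rabs (w y - w x) < r). split; [|split].
  - apply (open_inter T HT); [apply (Hk _ (open_R_ball _ _))|apply (Hw _ (open_R_ball _ _))].
  - rewrite !Rminus_diag, Rabs_R0. lra.
  - intros y [H1 H2]. apply HVe. eapply Rle_lt_trans; [apply HPhi|].
    apply Rle_lt_trans with (L * (2 * r)); [apply Rmult_le_compat_l; lra|].
    unfold r. apply Rmult_lt_reg_r with (2 * L + 1); [lra|].
    replace (L * (2 * (e / (2 * L + 1))) * (2 * L + 1)) with (2 * L * e) by (field; lra). nra.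
Qed.

Lemma continuous_lincomb (phi psi : R -> R) a b :
  continuousT open_R open_R phi -> continuousT open_R open_R psi ->
  continuousT open_R open_R (fun t => a * phi t + b * psi t).
Proof.
  intros. apply (continuous_combine open_R open_R_topology phi psi _ _ H H0 (lipschitz2_lincomb a b)).
Qed.

Lemma supported_combine {X : Type} (k w : X -> R) (Phi : R -> R -> R) K1 K2 :
  supported_in k K1 -> supported_in w K2 -> Phi 0 0 = 0 ->
  supported_in (fun x => Phi (k x) (w x)) (fun x => K1 x \/ K2 x).
Proof. intros Sk Sw H0 x Hx. rewrite Sk, Sw by tauto. exact H0. Qed.

Lemma shrink_comp_uniformly_close (psi : R -> R) :
  continuousT open_R open_R psi -> psi 0 = 0 ->
  forall eps, eps > 0 -> exists r, r > 0 /\ forall dl, 0 < dl <= r ->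
    forall t, Rabs (psi (shrink dl t) - psi t) <= eps.
Proof.
  intros Hpsi H0 eps Heps.
  destruct (Hpsi _ (open_R_ball 0 (eps / 2)) 0) as (e & He & Hb).
  { simpl. rewrite H0, Rminus_0_r, Rabs_R0. lra. }
  exists (e / 3). split; [lra|]. intros dl Hdl t.
  destruct (Rle_dec (2 * dl) (Rabs t)).
  - rewrite shrink_large by lra. rewrite Rminus_diag, Rabs_R0. lra.
  - pose proof (shrink_abs_le dl t ltac:(lra)).
    assert (A1 : Rabs (psi t - 0) < eps / 2) by (apply Hb; rewrite Rminus_0_r; lra).
    assert (A2 : Rabs (psi (shrink dl t) - 0) < eps / 2) by (apply Hb; rewrite Rminus_0_r; lra).
    revert A1 A2. generalize (psi t) (psi (shrink dl t)). intros. minmax_lra.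
Qed.

(** * Quasi-integrals *)

Section QuasiIntegral.
Context {X : Type} (T : (X -> Prop) -> Prop) (HT : is_topology T)
  (eta : (X -> R) -> R) (Heta : quasi_integral T eta).

Lemma Cc_zero : Cc T (fun _ => 0).
Proof.
  split; [apply (continuous_const T HT)|].
  exists (fun _ => False). split; [apply compact_empty|]. intros x _. reflexivity.
Qed.

Lemma Cc_combine k w Phi L : Cc T k -> Cc T w -> lipschitz2 Phi L -> Phi 0 0 = 0 ->
  Cc T (fun x => Phi (k x) (w x)).
Proof.
  intros (Hk & K1 & HK1 & Sk) (Hw & K2 & HK2 & Sw) HPhi H0. split.
  - exact (continuous_combine T HT k w Phi L Hk Hw HPhi).
  - exists (fun x => K1 x \/ K2 x). split; [apply compact_union; auto|].
    apply supported_combine; auto.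
Qed.

Lemma Cc_comp f psi : Cc T f -> continuousT open_R open_R psi -> psi 0 = 0 ->
  Cc T (fun x => psi (f x)).
Proof.
  intros (Hf & K & HK & Sf) Hpsi H0. split.
  - apply (continuous_comp _ open_R); auto.
  - exists K. split; [exact HK|]. intros x Hx. rewrite Sf by exact Hx. exact H0.
Qed.

Lemma quasi_integral_decompose f p q a b (r r1 r2 : X -> R) : Cc T f ->
  continuousT open_R open_R p -> continuousT open_R open_R q -> p 0 = 0 -> q 0 = 0 ->
  (forall x, r x = a * p (f x) + b * q (f x)) ->
  (forall x, r1 x = p (f x)) -> (forall x, r2 x = q (f x)) ->
  eta r = a * eta r1 + b * eta r2.
Proof.
  intros Hf Hp Hq p0 q0 Hr Hr1 Hr2.
  replace r with (fun x => a * p (f x) + b * q (f x)) by (extensionality x; auto).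
  replace r1 with (fun x => p (f x)) by (extensionality x; auto).
  replace r2 with (fun x => q (f x)) by (extensionality x; auto).
  exact (proj2 (proj2 Heta) f Hf p q Hp Hq p0 q0 a b).
Qed.

Lemma quasi_integral_zero : eta (fun _ => 0) = 0.
Proof.
  rewrite (quasi_integral_decompose (fun _ => 0) (fun t => t) (fun t => t) 0 0
    (fun _ => 0) (fun _ => 0) (fun _ => 0)); auto using Cc_zero.
  - ring.
  - intros V HV. exact HV.
  - intros V HV. exact HV.
  - intros. ring.
Qed.

(* On [k + d w] the truncations at level [d] split off [k⁺] and [d w - k⁻];
   on [k⁻ + w] the truncations at level [1] split off [k⁻] and [w]. *)
Lemma quasi_integral_add_cutoff k w d : Cc T k -> Cc T w -> (forall x, 0 <= w x <= 1) ->
  (forall x, k x <> 0 -> w x = 1) -> 0 <= d ->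
  eta (fun x => k x + d * w x) = eta k + d * eta w.
Proof.
  intros Hk Hw Hw01 Hw1 Hd.
  assert (Hkw : forall x, (k x = 0 /\ 0 <= d * w x <= d) \/ w x = 1).
  { intros x. destruct (Req_dec (k x) 0) as [E|E]; [left|right; auto].
    pose proof (Hw01 x). split; [exact E|split; nra]. }
  assert (Cpos : forall c, continuousT open_R open_R (fun t => pos_part (t - c))).
  { intros c. apply continuous_nonexpansive. intros. unfold pos_part. minmax_lra. }
  assert (Cmin : forall c, continuousT open_R open_R (fun t => Rmin t c)).
  { intros c. apply continuous_nonexpansive. intros. minmax_lra. }
  assert (Cneg : continuousT open_R open_R neg_part).
  { apply continuous_nonexpansive. intros. unfold neg_part. minmax_lra. }
  assert (Hk' : Cc T (fun x => neg_part (k x))).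
  { apply Cc_comp; [exact Hk|exact Cneg|unfold neg_part; minmax_lra]. }
  assert (S1 : eta k = 1 * eta (fun x => pos_part (k x - 0)) + -1 * eta (fun x => neg_part (k x))).
  { apply (quasi_integral_decompose k (fun t => pos_part (t - 0)) neg_part); auto;
      try (unfold pos_part, neg_part; minmax_lra).
    intros x. unfold pos_part, neg_part. minmax_lra. }
  assert (S2 : eta (fun x => k x + d * w x) =
    1 * eta (fun x => pos_part (k x - 0)) + 1 * eta (fun x => d * w x - neg_part (k x))).
  { apply (quasi_integral_decompose (fun x => 1 * k x + d * w x) (fun t => pos_part (t - d))
      (fun t => Rmin t d)); auto; try (unfold pos_part; minmax_lra).
    - apply (Cc_combine k w (fun u v => 1 * u + d * v) _ Hk Hw (lipschitz2_lincomb 1 d)). ring.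
    - intros x. unfold pos_part. minmax_lra.
    - intros x. unfold pos_part. destruct (Hkw x) as [[-> E] | ->]; minmax_lra.
    - intros x. unfold neg_part. destruct (Hkw x) as [[-> E] | ->]; minmax_lra. }
  assert (S3 : eta (fun x => d * w x - neg_part (k x)) =
    -1 * eta (fun x => neg_part (k x)) + d * eta w).
  { apply (quasi_integral_decompose (fun x => 1 * neg_part (k x) + 1 * w x) (fun t => pos_part (t - 1))
      (fun t => Rmin t 1)); auto; try (unfold pos_part; minmax_lra).
    - apply (Cc_combine _ w (fun u v => 1 * u + 1 * v) _ Hk' Hw (lipschitz2_lincomb 1 1)). ring.
    - intros x. pose proof (Hw01 x). unfold pos_part, neg_part.
      destruct (Hkw x) as [[-> E] | ->]; minmax_lra.
    - intros x. pose proof (Hw01 x). unfold pos_part, neg_part.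
      destruct (Hkw x) as [[-> E] | ->]; minmax_lra.
    - intros x. pose proof (Hw01 x). unfold neg_part.
      destruct (Hkw x) as [[-> E] | ->]; minmax_lra. }
  rewrite S2, S3, S1. ring.
Qed.

End QuasiIntegral.

(** * The extension to the one-point compactification *)

Section Compactification.
Context {X : Type} (T : (X -> Prop) -> Prop) (HT : is_topology T) (Hhaus : hausdorff T)
  (zeta : (X -> R) -> R) (Hzeta : quasi_integral T zeta) (O : X -> Prop)
  (N0 : R) (HN0 : 0 <= N0)
  (zeta_lip : forall f g, Cc T f -> Cc T g ->
     supported_in f (closureT T O) -> supported_in g (closureT T O) ->
     forall c, (forall x, Rabs (f x - g x) <= c) -> Rabs (zeta f - zeta g) <= N0 * c).

Local Notation continuous_hat F := (continuousT (ohat_open T O) open_R F).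
Local Notation zeta0' := (zeta0 T zeta O).
Local Notation lambda := (lambdaO T zeta O).

Definition lift (F : Ohat O -> R) (x : X) : R :=
  match excluded_middle_informative (O x) with
  | left h => F (Some (exist _ x h))
  | right _ => 0
  end.

Lemma lift_some F x (h : O x) : lift F x = F (Some (exist _ x h)).
Proof.
  unfold lift. destruct (excluded_middle_informative (O x)) as [h'|h']; [|contradiction].
  rewrite (proof_irrelevance _ h' h). reflexivity.
Qed.

Lemma lift_outside F x : ~ O x -> lift F x = 0.
Proof. unfold lift. destruct (excluded_middle_informative (O x)); tauto. Qed.

Lemma lift_value x : exists p, forall F, F None = 0 -> lift F x = F p.
Proof.
  destruct (classic (O x)) as [h|h].
  - exists (Some (exist _ x h)). intros F _. apply lift_some.
  - exists None. intros F F0. rewrite F0. apply lift_outside, h.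
Qed.

Lemma extend_comp_lift F psi p : F None = 0 -> psi 0 = 0 ->
  extend O (fun x => psi (lift F x)) p = psi (F p).
Proof.
  intros F0 psi0. destruct p as [[x h]|]; simpl.
  - rewrite (lift_some F x h). reflexivity.
  - rewrite F0. symmetry. exact psi0.
Qed.

(* [lift F] is continuous: preimages of open sets avoiding [0] are read off on [O],
   and those containing [0] are complements of compact subsets of [O]. *)
Lemma lift_continuous F : continuous_hat F -> F None = 0 -> continuousT T open_R (lift F).
Proof.
  intros HF F0 V HV. destruct (HF V HV) as [Hopen Hcompact]. simpl in Hopen, Hcompact.
  rewrite F0 in Hcompact.
  assert (Hin : forall x (h : O x), V (lift F x) <-> V (F (Some (exist _ x h)))).
  { intros x h. rewrite (lift_some F x h). tauto. }
  destruct (classic (V 0)) as [V0|V0].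
  - apply (open_iff T) with (fun x => ~ exists h : O x, ~ V (F (Some (exist _ x h)))).
    { exact (compact_complement_open T HT _ Hhaus (Hcompact V0)). }
    intros x. split.
    + intros Hx. destruct (classic (O x)) as [h|h].
      * apply (Hin x h). apply NNPP. intros Hv. apply Hx. exists h. exact Hv.
      * rewrite lift_outside by exact h. exact V0.
    + intros Hx (h & Hh). apply Hh, (Hin x h), Hx.
  - apply (open_iff T) with (fun x => exists h : O x, V (F (Some (exist _ x h)))).
    { exact Hopen. }
    intros x. split.
    + intros (h & Hh). apply (Hin x h), Hh.
    + intros Hx. destruct (classic (O x)) as [h|h].
      * exists h. apply (Hin x h), Hx.
      * rewrite lift_outside in Hx by exact h. contradiction.
Qed.

Lemma Ccin_intro g K : continuousT T open_R g -> compactT T K -> (forall x, K x -> O x) ->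
  supported_in g K -> Cc_in T O g.
Proof. intros. split; [split; [|exists K]|exists K]; auto. Qed.

Lemma Ccin_outside g x : Cc_in T O g -> ~ O x -> g x = 0.
Proof. intros (_ & K & _ & HKO & Hs) Hx. apply Hs. intros Kx. apply Hx, HKO, Kx. Qed.

Lemma Ccin_supported_closure g : Cc_in T O g -> supported_in g (closureT T O).
Proof.
  intros Hg x Hx. apply (Ccin_outside g x Hg). intros Ox. apply Hx. intros U _ Ux. exists x. auto.
Qed.

Lemma Ccin_combine g1 g2 Phi L : Cc_in T O g1 -> Cc_in T O g2 -> lipschitz2 Phi L ->
  Phi 0 0 = 0 -> Cc_in T O (fun x => Phi (g1 x) (g2 x)).
Proof.
  intros ((H1 & _) & K1 & HK1 & HK1O & S1) ((H2 & _) & K2 & HK2 & HK2O & S2) HPhi H0.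
  apply Ccin_intro with (fun x => K1 x \/ K2 x).
  - exact (continuous_combine T HT g1 g2 Phi L H1 H2 HPhi).
  - apply compact_union; auto.
  - intros x [Kx|Kx]; auto.
  - apply supported_combine; auto.
Qed.

Lemma Ccin_comp g psi : Cc_in T O g -> continuousT open_R open_R psi -> psi 0 = 0 ->
  Cc_in T O (fun x => psi (g x)).
Proof.
  intros ((Hg & _) & K & HK & HKO & S) Hpsi H0. apply Ccin_intro with K; auto.
  - apply (continuous_comp _ open_R); auto.
  - intros x Hx. rewrite S by exact Hx. exact H0.
Qed.

Lemma Ccin_zero : Cc_in T O (fun _ => 0).
Proof.
  apply Ccin_intro with (fun _ => False).
  - apply (continuous_const T HT).
  - apply compact_empty.
  - intros x [].
  - intros x _. reflexivity.
Qed.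

Lemma Ccin_lift F W : continuous_hat F -> F None = 0 -> ohat_open T O W -> W None ->
  (forall p, W p -> F p = 0) -> Cc_in T O (lift F).
Proof.
  intros HF F0 HW WN HWF.
  apply Ccin_intro with (fun x => exists h : O x, ~ W (Some (exist _ x h))).
  - apply lift_continuous; auto.
  - exact (proj2 HW WN).
  - intros x (h & _). exact h.
  - intros x Hx. destruct (classic (O x)) as [h|h].
    + rewrite (lift_some F x h). apply HWF, NNPP. intros HW'. apply Hx. exists h. exact HW'.
    + apply lift_outside, h.
Qed.

Lemma Ccin_lift_comp h psi dl : continuous_hat h -> h None = 0 -> 0 < dl ->
  continuousT open_R open_R psi -> (forall t, Rabs t <= dl -> psi t = 0) ->
  Cc_in T O (lift (fun p => psi (h p))).
Proof.
  intros Hh h0 Hdl Hpsi Hsmall.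
  apply Ccin_lift with (fun p => Rabs (h p - 0) < dl).
  - apply (continuous_comp _ open_R); auto.
  - rewrite h0. apply Hsmall. rewrite Rabs_R0. lra.
  - exact (Hh _ (open_R_ball 0 dl)).
  - simpl. rewrite h0, Rminus_0_r, Rabs_R0. exact Hdl.
  - intros p Hp. apply Hsmall. rewrite Rminus_0_r in Hp. lra.
Qed.

Lemma extend_value x : exists p, forall g, Cc_in T O g -> g x = extend O g p.
Proof.
  destruct (classic (O x)) as [h|h].
  - exists (Some (exist _ x h)). reflexivity.
  - exists None. intros g Hg. exact (Ccin_outside g x Hg h).
Qed.

Lemma zeta_mono_in g1 g2 : Cc_in T O g1 -> Cc_in T O g2 -> (forall x, g1 x <= g2 x) ->
  zeta g1 <= zeta g2.
Proof. intros G1 G2. apply (proj1 Hzeta); [apply G1|apply G2]. Qed.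

Lemma zeta_lip_in g1 g2 c : Cc_in T O g1 -> Cc_in T O g2 ->
  (forall x, Rabs (g1 x - g2 x) <= c) -> Rabs (zeta g1 - zeta g2) <= N0 * c.
Proof.
  intros G1 G2. apply zeta_lip; [apply G1|apply G2|apply Ccin_supported_closure; auto..].
Qed.

Definition close (c : R) (g : X -> R) (F : Ohat O -> R) : Prop :=
  forall p, Rabs (extend O g p - F p) <= c.

Definition approximable (F : Ohat O -> R) : Prop :=
  forall c, c > 0 -> exists g, Cc_in T O g /\ close c g F.

Lemma zeta_close_lip g1 g2 F c1 c2 : Cc_in T O g1 -> Cc_in T O g2 ->
  close c1 g1 F -> close c2 g2 F -> Rabs (zeta g1 - zeta g2) <= N0 * (c1 + c2).
Proof.
  intros G1 G2 C1 C2. apply zeta_lip_in; auto. intros x.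
  destruct (extend_value x) as (p & Hp). rewrite (Hp g1 G1), (Hp g2 G2).
  specialize (C1 p). specialize (C2 p).
  revert C1 C2. generalize (extend O g1 p) (extend O g2 p) (F p). intros. minmax_lra.
Qed.

Definition zeta_limit (F : Ohat O -> R) (r : R) : Prop :=
  forall eps, eps > 0 -> exists delta, delta > 0 /\
    forall g, Cc_in T O g -> close delta g F -> Rabs (zeta g - r) <= eps.

(* The limit is the supremum of the lower bounds [zeta g - N0 c] over the
   [c]-close approximants [g]. *)
Lemma zeta_limit_exists F : approximable F -> exists r, zeta_limit F r.
Proof.
  intros HA. destruct (HA 1 Rlt_0_1) as (g0 & G0 & C0).
  set (E := fun r => exists g c, Cc_in T O g /\ close c g F /\ r = zeta g - N0 * c).
  destruct (completeness E) as (r0 & Hub & Hlub).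
  - exists (zeta g0 + N0). intros r (g & c & G & C & ->).
    pose proof (zeta_close_lip g g0 F c 1 G G0 C C0). minmax_lra.
  - exists (zeta g0 - N0 * 1), g0, 1. auto.
  - assert (Hr0 : forall g c, Cc_in T O g -> close c g F -> Rabs (zeta g - r0) <= N0 * c).
    { intros g c G C. assert (zeta g - N0 * c <= r0) by (apply Hub; exists g, c; auto).
      assert (r0 <= zeta g + N0 * c).
      { apply Hlub. intros r (g' & c' & G' & C' & ->).
        pose proof (zeta_close_lip g g' F c c' G G' C C'). minmax_lra. }
      minmax_lra. }
    exists r0. intros eps Heps. exists (eps / (N0 + 1)). split; [apply Rdiv_lt_0_compat; lra|].
    intros g G C. eapply Rle_trans; [exact (Hr0 g _ G C)|].
    apply Rmult_le_reg_r with (N0 + 1); [lra|].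
    replace (N0 * (eps / (N0 + 1)) * (N0 + 1)) with (N0 * eps) by (field; lra). nra.
Qed.

Lemma zeta0_close F g c : approximable F -> Cc_in T O g -> close c g F ->
  Rabs (zeta g - zeta0' F) <= N0 * c.
Proof.
  intros HA G C.
  assert (Hlim : zeta_limit F (zeta0' F)).
  { unfold zeta0. apply (epsilon_spec (inhabits 0) (zeta_limit F)), zeta_limit_exists, HA. }
  apply (Rle_of_le_add_mul _ _ (N0 + 1)); [lra|]. intros e He.
  destruct (Hlim e He) as (delta & Hdelta & Hg).
  destruct (HA (Rmin delta e)) as (g' & G' & C'); [apply Rmin_pos; lra|].
  assert (Rabs (zeta g' - zeta0' F) <= e).
  { apply Hg; auto. intros p. eapply Rle_trans; [apply C'|apply Rmin_l]. }
  pose proof (zeta_close_lip g g' F c _ G G' C C').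
  assert (N0 * Rmin delta e <= N0 * e) by (apply Rmult_le_compat_l; [lra|apply Rmin_r]).
  minmax_lra.
Qed.

Lemma zeta0_lip F1 F2 c : approximable F1 -> approximable F2 ->
  (forall p, Rabs (F1 p - F2 p) <= c) -> Rabs (zeta0' F1 - zeta0' F2) <= N0 * c.
Proof.
  intros A1 A2 H. apply (Rle_of_le_add_mul _ _ (4 * N0)); [lra|]. intros e He.
  destruct (A1 e He) as (g1 & G1 & C1). destruct (A2 e He) as (g2 & G2 & C2).
  pose proof (zeta0_close F1 g1 e A1 G1 C1). pose proof (zeta0_close F2 g2 e A2 G2 C2).
  assert (C2' : close (e + c) g2 F1).
  { intros p. specialize (C2 p). specialize (H p). minmax_lra. }
  pose proof (zeta_close_lip g1 g2 F1 e (e + c) G1 G2 C1 C2'). minmax_lra.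
Qed.

Definition shrink_approx (h : Ohat O -> R) (dl : R) : X -> R :=
  lift (fun p => shrink dl (h p)).

Lemma Ccin_shrink_approx h dl : continuous_hat h -> h None = 0 -> 0 < dl ->
  Cc_in T O (shrink_approx h dl).
Proof.
  intros Hh h0 Hdl. apply (Ccin_lift_comp h (shrink dl) dl); auto.
  - apply (continuous_of_lipschitz _ 3); [lra|]. intros. apply shrink_lipschitz, Hdl.
  - intros t Ht. apply shrink_small; auto.
Qed.

Lemma close_shrink_approx h dl : h None = 0 -> 0 < dl -> close dl (shrink_approx h dl) h.
Proof.
  intros h0 Hdl p. unfold shrink_approx.
  rewrite (extend_comp_lift (fun p => shrink dl (h p)) (fun t => t)); [|rewrite h0; apply shrink_0|auto].
  apply shrink_dist, Hdl.
Qed.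

Lemma close_comp_shrink_approx h psi eps : h None = 0 ->
  continuousT open_R open_R psi -> psi 0 = 0 -> eps > 0 ->
  exists r, r > 0 /\ forall dl, 0 < dl <= r ->
    close eps (fun x => psi (shrink_approx h dl x)) (fun p => psi (h p)).
Proof.
  intros h0 Hpsi psi0 Heps.
  destruct (shrink_comp_uniformly_close psi Hpsi psi0 eps Heps) as (r & Hr & Hclose).
  exists r. split; [exact Hr|]. intros dl Hdl p. unfold shrink_approx.
  rewrite extend_comp_lift; [apply Hclose, Hdl|rewrite h0; apply shrink_0|exact psi0].
Qed.

Lemma approximable_continuous h : continuous_hat h -> h None = 0 -> approximable h.
Proof.
  intros Hh h0 c Hc. exists (shrink_approx h c).
  split; [apply Ccin_shrink_approx|apply close_shrink_approx]; auto.
Qed.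

Definition lambda_set (r : R) : Prop := exists g, Cc_in T O g /\
  (forall x, O x -> g x <= 1) /\ (forall x, ~ O x -> g x <= 0) /\ r = zeta g.

Lemma lambda_lub : is_lub lambda_set lambda.
Proof.
  unfold lambdaO. apply (epsilon_spec (inhabits 0) (is_lub lambda_set)).
  destruct (completeness lambda_set) as (m & Hm); [| |exists m; exact Hm].
  - exists N0. intros r (g & G & G1 & G0 & ->).
    assert (Gpos : Cc_in T O (fun x => pos_part (g x))).
    { apply Ccin_comp; [exact G| |unfold pos_part; minmax_lra].
      apply continuous_nonexpansive. intros. unfold pos_part. minmax_lra. }
    apply Rle_trans with (zeta (fun x => pos_part (g x))).
    + apply zeta_mono_in; auto. intros x. unfold pos_part. minmax_lra.
    + assert (Hbound : Rabs (zeta (fun x => pos_part (g x)) - zeta (fun _ => 0)) <= N0 * 1).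
      { apply zeta_lip_in; auto using Ccin_zero. intros x. unfold pos_part.
        destruct (classic (O x)) as [Ox|Ox]; [specialize (G1 x Ox)|specialize (G0 x Ox)]; minmax_lra. }
      rewrite (quasi_integral_zero T HT zeta Hzeta) in Hbound. minmax_lra.
  - exists (zeta (fun _ => 0)), (fun _ => 0). split; [exact Ccin_zero|].
    split; [intros; lra|]. split; [intros; lra|reflexivity].
Qed.

Lemma lambda_ub g : Cc_in T O g -> (forall x, O x -> g x <= 1) -> (forall x, ~ O x -> g x <= 0) ->
  zeta g <= lambda.
Proof. intros. apply lambda_lub. exists g. auto. Qed.

Lemma lambda_nonneg : 0 <= lambda.
Proof.
  rewrite <- (quasi_integral_zero T HT zeta Hzeta).
  apply lambda_ub; [exact Ccin_zero|intros; lra|intros; lra].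
Qed.

Lemma shrink_ramp_approximants h k d dl : continuous_hat h -> continuous_hat k ->
  h None = 0 -> k None = 0 -> 0 <= d -> (forall p, h p <= k p + d) -> 0 < dl ->
  exists w, Cc_in T O w /\ (forall x, 0 <= w x <= 1) /\ (forall x, ~ O x -> w x = 0) /\
    (forall x, shrink_approx k (2 * dl) x <> 0 -> w x = 1) /\
    (forall x, shrink_approx h (2 * dl) x <= shrink_approx k (2 * dl) x + d * w x + 4 * dl).
Proof.
  intros Hh Hk h0 k0 Hd Hhk Hdl.
  assert (Cramp : continuousT open_R open_R (ramp dl)).
  { apply (continuous_of_lipschitz _ (/ dl)); [left; apply Rinv_0_lt_compat, Hdl|].
    intros. apply ramp_lipschitz, Hdl. }
  exists (fun x => Rmax (lift (fun p => ramp dl (h p)) x) (lift (fun p => ramp dl (k p)) x)).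
  assert (shrink_at_0 : shrink (2 * dl) 0 = 0) by apply shrink_0.
  assert (ramp_0 : ramp dl 0 = 0) by (apply ramp_small; [exact Hdl|rewrite Rabs_R0; lra]).
  split; [|split; [|split; [|split]]].
  - apply (Ccin_combine _ _ Rmax 1); [| |exact lipschitz2_max|minmax_lra];
      apply (Ccin_lift_comp _ (ramp dl) dl); auto using ramp_small.
  - intros x. destruct (lift_value x) as (p & Hp).
    rewrite !Hp by (rewrite ?h0, ?k0; exact ramp_0).
    pose proof (ramp_range dl (h p)). pose proof (ramp_range dl (k p)). minmax_lra.
  - intros x Hx. rewrite !lift_outside by exact Hx. minmax_lra.
  - intros x. unfold shrink_approx. destruct (lift_value x) as (p & Hp).
    rewrite !Hp by (rewrite ?h0, ?k0; assumption). intros Hnz.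
    assert (2 * dl <= Rabs (k p)).
    { destruct (Rle_dec (2 * dl) (Rabs (k p))) as [|Hsmall]; [assumption|].
      exfalso. apply Hnz. apply shrink_small; lra. }
    rewrite (ramp_large dl (k p)) by lra.
    pose proof (ramp_range dl (h p)). minmax_lra.
  - intros x. unfold shrink_approx. destruct (lift_value x) as (p & Hp).
    rewrite !Hp by (rewrite ?h0, ?k0; assumption). apply shrink_le_add_ramp; auto.
Qed.

(* Up to [O(dl)], [h] lies below [k + d w] with [zeta (k + d w) = zeta k + d zeta w]. *)
Lemma zeta0_le_add h k d : continuous_hat h -> continuous_hat k -> h None = 0 -> k None = 0 ->
  0 <= d -> (forall p, h p <= k p + d) -> zeta0' h <= zeta0' k + lambda * d.
Proof.
  intros Hh Hk h0 k0 Hd Hhk.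
  apply (Rle_of_le_add_mul _ _ (8 * N0)); [lra|]. intros dl Hdl.
  destruct (shrink_ramp_approximants h k d dl) as (w & Cw & Hw01 & Hwout & Hw1 & Hbelow); auto.
  set (h' := shrink_approx h (2 * dl)). set (k' := shrink_approx k (2 * dl)).
  assert (Ch : Cc_in T O h') by (apply Ccin_shrink_approx; auto; lra).
  assert (Ck : Cc_in T O k') by (apply Ccin_shrink_approx; auto; lra).
  set (G := fun x => 1 * k' x + d * w x).
  assert (CG : Cc_in T O G).
  { apply (Ccin_combine _ _ _ _ Ck Cw (lipschitz2_lincomb 1 d)). ring. }
  assert (Cm : Cc_in T O (fun x => Rmin (h' x) (G x))).
  { apply (Ccin_combine _ _ _ _ Ch CG lipschitz2_min). minmax_lra. }
  assert (Esplit : zeta G = zeta k' + d * zeta w).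
  { unfold G. rewrite <- (quasi_integral_add_cutoff T HT zeta Hzeta k' w d); auto;
      [|apply Ck|apply Cw]. f_equal. extensionality x. ring. }
  assert (Emin : Rabs (zeta h' - zeta (fun x => Rmin (h' x) (G x))) <= N0 * (4 * dl)).
  { apply zeta_lip_in; auto. intros x. specialize (Hbelow x). unfold G, h', k'. minmax_lra. }
  assert (Emono : zeta (fun x => Rmin (h' x) (G x)) <= zeta G).
  { apply zeta_mono_in; auto. intros x. apply Rmin_r. }
  assert (Eh : Rabs (zeta h' - zeta0' h) <= N0 * (2 * dl)).
  { apply zeta0_close; [apply approximable_continuous|exact Ch|apply close_shrink_approx]; auto; lra. }
  assert (Ek : Rabs (zeta k' - zeta0' k) <= N0 * (2 * dl)).
  { apply zeta0_close; [apply approximable_continuous|exact Ck|apply close_shrink_approx]; auto; lra. }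
  assert (Elambda : d * zeta w <= d * lambda).
  { apply Rmult_le_compat_l; [exact Hd|]. apply lambda_ub; [exact Cw|intros; apply Hw01|].
    intros x Hx. rewrite Hwout by exact Hx. lra. }
  minmax_lra.
Qed.

Lemma zeta0_lincomb h psi1 psi2 a b : continuous_hat h -> h None = 0 ->
  continuousT open_R open_R psi1 -> continuousT open_R open_R psi2 -> psi1 0 = 0 -> psi2 0 = 0 ->
  zeta0' (fun p => a * psi1 (h p) + b * psi2 (h p)) =
  a * zeta0' (fun p => psi1 (h p)) + b * zeta0' (fun p => psi2 (h p)).
Proof.
  intros Hh h0 Hpsi1 Hpsi2 psi1_0 psi2_0.
  set (Psi := fun t => a * psi1 t + b * psi2 t).
  assert (HPsi : continuousT open_R open_R Psi) by (apply continuous_lincomb; auto).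
  assert (Psi0 : Psi 0 = 0) by (unfold Psi; rewrite psi1_0, psi2_0; ring).
  assert (Happrox : forall psi, continuousT open_R open_R psi -> psi 0 = 0 ->
    approximable (fun p => psi (h p))).
  { intros psi Hpsi psi0. apply approximable_continuous; [apply (continuous_comp _ open_R); auto|].
    rewrite h0. exact psi0. }
  apply (eq_of_dist_le_mul _ _ (N0 * (1 + Rabs a + Rabs b))).
  { pose proof (Rabs_pos a). pose proof (Rabs_pos b). nra. }
  intros e He.
  destruct (close_comp_shrink_approx h psi1 e) as (r1 & Hr1 & C1); auto.
  destruct (close_comp_shrink_approx h psi2 e) as (r2 & Hr2 & C2); auto.
  destruct (close_comp_shrink_approx h Psi e) as (r3 & Hr3 & C3); auto.
  set (dl := Rmin r1 (Rmin r2 r3)).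
  assert (Hdl : 0 < dl) by (apply Rmin_pos; [|apply Rmin_pos]; lra).
  assert (dl <= r1 /\ dl <= r2 /\ dl <= r3) as (D1 & D2 & D3).
  { unfold dl. pose proof (Rmin_l r1 (Rmin r2 r3)). pose proof (Rmin_r r1 (Rmin r2 r3)).
    pose proof (Rmin_l r2 r3). pose proof (Rmin_r r2 r3). lra. }
  set (G := shrink_approx h dl).
  assert (CG : Cc_in T O G) by (apply Ccin_shrink_approx; auto).
  pose proof (zeta0_close _ _ _ (Happrox psi1 Hpsi1 psi1_0) (Ccin_comp G psi1 CG Hpsi1 psi1_0)
    (C1 dl ltac:(lra))) as Z1.
  pose proof (zeta0_close _ _ _ (Happrox psi2 Hpsi2 psi2_0) (Ccin_comp G psi2 CG Hpsi2 psi2_0)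
    (C2 dl ltac:(lra))) as Z2.
  pose proof (zeta0_close _ _ _ (Happrox Psi HPsi Psi0) (Ccin_comp G Psi CG HPsi Psi0)
    (C3 dl ltac:(lra))) as Z.
  unfold Psi in Z. rewrite (proj2 (proj2 Hzeta) G (proj1 CG) psi1 psi2 Hpsi1 Hpsi2 psi1_0 psi2_0) in Z.
  revert Z Z1 Z2. generalize (zeta (fun x => psi1 (G x))) (zeta (fun x => psi2 (G x))).
  intros z1 z2 Z Z1 Z2.
  assert (Rabs (a * (z1 - zeta0' (fun p => psi1 (h p)))) <= Rabs a * (N0 * e)).
  { rewrite Rabs_mult. apply Rmult_le_compat_l; [apply Rabs_pos|exact Z1]. }
  assert (Rabs (b * (z2 - zeta0' (fun p => psi2 (h p)))) <= Rabs b * (N0 * e)).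
  { rewrite Rabs_mult. apply Rmult_le_compat_l; [apply Rabs_pos|exact Z2]. }
  minmax_lra.
Qed.

Lemma continuous_hat_sub_const F c : continuous_hat F -> continuous_hat (fun p => F p - c).
Proof.
  intros HF. apply (continuous_comp _ open_R _ F (fun t => t - c)); [exact HF|].
  apply continuous_nonexpansive. intros a b. replace (a - c - (b - c)) with (a - b) by ring. lra.
Qed.

Lemma zeta_hat_mono f g : continuous_hat f -> continuous_hat g -> (forall p, f p <= g p) ->
  zeta_hat T zeta O f <= zeta_hat T zeta O g.
Proof.
  intros Hf Hg Hfg. unfold zeta_hat. pose proof (Hfg None).
  pose proof (zeta0_le_add (fun p => f p - f None) (fun p => g p - g None) (g None - f None)
    (continuous_hat_sub_const f _ Hf) (continuous_hat_sub_const g _ Hg)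
    ltac:(cbv beta; ring) ltac:(cbv beta; ring) ltac:(lra) ltac:(intros p; specialize (Hfg p); lra)).
  assert (lambda * f None + lambda * (g None - f None) = lambda * g None) by ring.
  lra.
Qed.

Lemma zeta_hat_lip f g : continuous_hat f -> continuous_hat g ->
  forall c, (forall p, Rabs (f p - g p) <= c) ->
  Rabs (zeta_hat T zeta O f - zeta_hat T zeta O g) <= (2 * N0 + lambda) * c.
Proof.
  intros Hf Hg c Hc. unfold zeta_hat.
  pose proof (zeta0_lip (fun p => f p - f None) (fun p => g p - g None) (2 * c)
    (approximable_continuous _ (continuous_hat_sub_const f _ Hf) ltac:(cbv beta; ring))
    (approximable_continuous _ (continuous_hat_sub_const g _ Hg) ltac:(cbv beta; ring))) as Z.
  assert (Rabs (lambda * f None - lambda * g None) <= lambda * c).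
  { rewrite <- Rmult_minus_distr_l, Rabs_mult, (Rabs_right _ (Rle_ge _ _ lambda_nonneg)).
    apply Rmult_le_compat_l; [exact lambda_nonneg|apply Hc]. }
  assert (Rabs (zeta0' (fun p => f p - f None) - zeta0' (fun p => g p - g None)) <= N0 * (2 * c)).
  { apply Z. intros p. pose proof (Hc p). pose proof (Hc None). minmax_lra. }
  minmax_lra.
Qed.

Lemma zeta_hat_lincomb f : continuous_hat f ->
  forall phi psi : R -> R, continuousT open_R open_R phi -> continuousT open_R open_R psi ->
  forall a b, zeta_hat T zeta O (fun p => a * phi (f p) + b * psi (f p)) =
  a * zeta_hat T zeta O (fun p => phi (f p)) + b * zeta_hat T zeta O (fun p => psi (f p)).
Proof.
  intros Hf phi psi Hphi Hpsi a b. unfold zeta_hat. set (c := f None).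
  set (centre := fun (q : R -> R) t => q (t + c) - q c).
  assert (Hcentre : forall q, continuousT open_R open_R q -> continuousT open_R open_R (centre q)).
  { intros q Hq. unfold centre. apply (continuous_comp _ open_R _ (fun t => q (t + c)) (fun s => s - q c)).
    - apply (continuous_comp _ open_R); [|exact Hq].
      apply continuous_nonexpansive. intros x y. replace (x + c - (y + c)) with (x - y) by ring. lra.
    - apply continuous_nonexpansive. intros x y. replace (x - q c - (y - q c)) with (x - y) by ring. lra. }
  assert (Hback : forall q p, centre q (f p - c) = q (f p) - q c).
  { intros q p. unfold centre. replace (f p - c + c) with (f p) by ring. reflexivity. }
  pose proof (zeta0_lincomb (fun p => f p - c) (centre phi) (centre psi) a b
    (continuous_hat_sub_const f c Hf) ltac:(cbv beta; unfold c; ring) (Hcentre phi Hphi) (Hcentre psi Hpsi)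
    ltac:(unfold centre; rewrite Rplus_0_l; ring) ltac:(unfold centre; rewrite Rplus_0_l; ring)) as E.
  replace (fun p => a * phi (f p) + b * psi (f p) - (a * phi c + b * psi c))
    with (fun p => a * centre phi (f p - c) + b * centre psi (f p - c))
    by (extensionality p; rewrite !Hback; ring).
  replace (fun p => phi (f p) - phi c) with (fun p => centre phi (f p - c))
    by (extensionality p; apply Hback).
  replace (fun p => psi (f p) - psi c) with (fun p => centre psi (f p - c))
    by (extensionality p; apply Hback).
  rewrite E. ring.
Qed.

End Compactification.

Theorem lemma2p3 (X : Type) (T : (X -> Prop) -> Prop)
  (HT : is_topology T) (Hhaus : hausdorff T) (Hlc : locally_compact T)
  (zeta : (X -> R) -> R) (Hzeta : quasi_integral T zeta)
  (O : X -> Prop) (HO : T O) (HOc : compactT T (closureT T O)) :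
  quasi_integral (ohat_open T O) (zeta_hat T zeta O) /\
  (forall f g : Ohat O -> R,
     continuousT (ohat_open T O) open_R f -> continuousT (ohat_open T O) open_R g ->
     (forall p, f p <= g p) -> zeta_hat T zeta O f <= zeta_hat T zeta O g) /\
  (exists N, 0 <= N /\ forall f g : Ohat O -> R,
     continuousT (ohat_open T O) open_R f -> continuousT (ohat_open T O) open_R g ->
     forall c, (forall p, Rabs (f p - g p) <= c) ->
     Rabs (zeta_hat T zeta O f - zeta_hat T zeta O g) <= N * c) /\
  (forall f : Ohat O -> R, continuousT (ohat_open T O) open_R f ->
     forall phi psi : R -> R, continuousT open_R open_R phi -> continuousT open_R open_R psi ->
     forall a b,
       zeta_hat T zeta O (fun p => a * phi (f p) + b * psi (f p)) =
       a * zeta_hat T zeta O (fun p => phi (f p)) + b * zeta_hat T zeta O (fun p => psi (f p))).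
Proof.
  destruct (proj1 (proj2 Hzeta) (closureT T O) HOc) as (N0 & HN0 & Hlip).
  set (N := 2 * N0 + lambdaO T zeta O).
  assert (HN : 0 <= N) by (pose proof (lambda_nonneg T HT zeta Hzeta O N0 HN0 Hlip); unfold N; lra).
  pose proof (zeta_hat_mono T HT Hhaus zeta Hzeta O N0 HN0 Hlip) as Mono.
  pose proof (zeta_hat_lip T HT Hhaus zeta Hzeta O N0 HN0 Hlip) as Lip.
  pose proof (zeta_hat_lincomb T HT Hhaus zeta Hzeta O N0 HN0 Hlip) as Lin.
  split; [|split; [exact Mono|split; [exists N; split; [exact HN|exact Lip]|exact Lin]]].
  split; [|split].
  - intros f g Hf Hg. exact (Mono f g (proj1 Hf) (proj1 Hg)).
  - intros K _. exists N. split; [exact HN|].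
    intros f g Hf Hg _ _. exact (Lip f g (proj1 Hf) (proj1 Hg)).
  - intros f Hf p q Hp Hq _ _. exact (Lin f (proj1 Hf) p q Hp Hq).
Qed.
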